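(* Let $\rho_1,\rho_2:[a,b]\to\mathbb{R}$ be such that each $\rho_i$ is continuous on $[a,b]$ except at the points of a finite set $D_i\subset[a,b]$, at which it has discontinuities of the first kind (the one-sided limits exist and are finite), and assume $D_1\cap D_2=\emptyset$. Let $(\rho_1^\epsilon)$, $(\rho_2^\epsilon)$ be families of functions on $[a,b]$ with $\lim_{\epsilon\to0}\rho_1^\epsilon=\rho_1$ and $\lim_{\epsilon\to0}\rho_2^\epsilon=\rho_2$ on $[a,b]$. Then $\lim_{\epsilon\to0}(\rho_1^\epsilon+\rho_2^\epsilon)=\rho_1+\rho_2$ on $[a,b]$.
   Context: For functions $\rho,\hat\rho:[a,b]\to\mathbb{R}$ and $\Delta>0$, write $\rho\in O(\hat\rho,\Delta)$ on $[a,b]$ iff for every $x\in[a,b]$: $\inf_{y\in[a,b],|y-x|\le\Delta}\hat\rho(y)-\Delta<\rho(x)<\sup_{y\in[a,b],|y-x|\le\Delta}\hat\rho(y)+\Delta$. For a family $(\rho^\epsilon)_{\epsilon>0}$, $\lim_{\epsilon\to0}\rho^\epsilon=\hat\rho$ on $[a,b]$ means: for every $\Delta>0$ there is $\epsilon_0>0$ with $\rho^\epsilon\in O(\hat\rho,\Delta)$ on $[a,b]$ for all $\epsilon\in(0,\epsilon_0)$. *)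

From Stdlib Require Import Reals List.
Open Scope R_scope.

Definition inI (a b x : R) : Prop := a <= x <= b.

Definition cont_in (a b : R) (rho : R -> R) (x : R) : Prop :=
  forall eps, 0 < eps -> exists delta, 0 < delta /\
    forall y, inI a b y -> Rabs (y - x) < delta -> Rabs (rho y - rho x) < eps.

Definition right_lim (a b : R) (rho : R -> R) (x l : R) : Prop :=
  forall eps, 0 < eps -> exists delta, 0 < delta /\
    forall y, inI a b y -> x < y < x + delta -> Rabs (rho y - l) < eps.

Definition left_lim (a b : R) (rho : R -> R) (x l : R) : Prop :=
  forall eps, 0 < eps -> exists delta, 0 < delta /\
    forall y, inI a b y -> x - delta < y < x -> Rabs (rho y - l) < eps.

Definition first_kind_except (a b : R) (rho : R -> R) (D : list R) : Prop :=
  (forall d, In d D -> inI a b d) /\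
  (forall x, inI a b x -> ~ In x D -> cont_in a b rho x) /\
  (forall d, In d D ->
      ~ cont_in a b rho d /\
      (d < b -> exists l, right_lim a b rho d l) /\
      (a < d -> exists l, left_lim a b rho d l)).

(* rho ∈ O(rhohat, Δ) on [a,b]:
   for every x in [a,b],
     inf_{y∈[a,b],|y-x|<=Δ} rhohat y - Δ < rho x < sup_{y∈[a,b],|y-x|<=Δ} rhohat y + Δ.
   The inf/sup are over a nonempty set (it contains x) and taken in the extended
   reals; "inf S - Δ < r" is literally "some y in S has rhohat y - Δ < r",
   and dually for sup. *)
Definition InO (a b : R) (rho rhohat : R -> R) (Delta : R) : Prop :=
  forall x, inI a b x ->
    (exists y, inI a b y /\ Rabs (y - x) <= Delta /\ rhohat y - Delta < rho x) /\
    (exists y, inI a b y /\ Rabs (y - x) <= Delta /\ rho x < rhohat y + Delta).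

Definition lim_fam (a b : R) (rhoe : R -> R -> R) (rhohat : R -> R) : Prop :=
  forall Delta, 0 < Delta -> exists eps0, 0 < eps0 /\
    forall eps, 0 < eps < eps0 -> InO a b (rhoe eps) rhohat Delta.

From Stdlib Require Import Reals List Lra Classical ClassicalEpsilon.
From Coquelicot Require Import Coquelicot.
Open Scope R_scope.

(* Since D1 and D2 are disjoint, at every point of [a,b]
   at least one of rho1, rho2 is continuous, so around every point one of the
   two functions has oscillation < eta on a small ball.  By compactness of
   [a,b] (a Lebesgue number argument) the radius of that ball can be chosen
   uniformly.  Now fix x.  Each rho_i^eps(x) is bounded below by
   rho_i(y_i) - dl for some y_i near x.  If, say, rho1 oscillates little near
   x, then rho1(y_2) is close to rho1(y_1), so the single point y_2 witnesses
   the lower bound for the sum; upper bounds are symmetric. *)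

Lemma lebesgue_number (a b : R) (G : R -> R -> Prop) :
  (forall t, inI a b t -> exists r, 0 < r /\ G t r) ->
  (forall t r x d, G t r -> Rabs (x - t) + d <= r -> G x d) ->
  exists d, 0 < d /\ forall x, inI a b x -> G x d.
Proof.
  intros Hloc Hsub.
  assert (Hr : forall t, {r : R | 0 < r /\ (inI a b t -> G t r)}).
  { intro t; apply constructive_indefinite_description.
    destruct (classic (inI a b t)) as [Ht | Ht].
    - destruct (Hloc t Ht) as [r [Hr HG]]; exists r; tauto.
    - exists 1; split; [lra | tauto]. }
  (* half radii, so that a ball of radius d <= r/2 centred within r/2 of t
     lies in the ball of radius r around t *)
  set (half := fun t => mkposreal (proj1_sig (Hr t) / 2)
                 ltac:(pose proof (proj1 (proj2_sig (Hr t))); lra)).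
  destruct (compactness_value_1d a b half) as [d Hd].
  exists d; split; [apply cond_pos |].
  intros x Hx; apply NNPP; intro HnG; apply (Hd x Hx).
  intros [t [Ht [Hxt Hdt]]]; apply HnG; simpl in Hxt, Hdt.
  destruct (proj2_sig (Hr t)) as [_ HGt].
  apply (Hsub t (proj1_sig (Hr t))); [exact (HGt Ht) | lra].
Qed.

Definition small_osc (a b : R) (rho : R -> R) (x r eta : R) : Prop :=
  forall y z, inI a b y -> inI a b z -> Rabs (y - x) <= r -> Rabs (z - x) <= r ->
    Rabs (rho y - rho z) < eta.

Lemma small_osc_sub (a b : R) (rho : R -> R) (t r x d eta : R) :
  small_osc a b rho t r eta -> Rabs (x - t) + d <= r -> small_osc a b rho x d eta.
Proof.
  intros Hosc Hball y z Hy Hz Hyx Hzx; apply Hosc; auto.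
  - replace (y - t) with ((y - x) + (x - t)) by ring.
    pose proof (Rabs_triang (y - x) (x - t)); lra.
  - replace (z - t) with ((z - x) + (x - t)) by ring.
    pose proof (Rabs_triang (z - x) (x - t)); lra.
Qed.

Lemma cont_small_osc (a b : R) (rho : R -> R) (t eta : R) :
  0 < eta -> cont_in a b rho t -> exists r, 0 < r /\ small_osc a b rho t r eta.
Proof.
  intros Heta Hc; destruct (Hc (eta / 2)) as [r [Hr Hclose]]; [lra |].
  exists (r / 2); split; [lra |]; intros y z Hy Hz Hyt Hzt.
  assert (Hy' : Rabs (rho y - rho t) < eta / 2) by (apply Hclose; auto; lra).
  assert (Hz' : Rabs (rho z - rho t) < eta / 2) by (apply Hclose; auto; lra).
  replace (rho y - rho z) with ((rho y - rho t) + - (rho z - rho t)) by ring.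
  pose proof (Rabs_triang (rho y - rho t) (- (rho z - rho t))).
  rewrite Rabs_Ropp in *; lra.
Qed.

Lemma one_continuous (a b : R) (rho1 rho2 : R -> R) (D1 D2 : list R) (t : R) :
  first_kind_except a b rho1 D1 -> first_kind_except a b rho2 D2 ->
  (forall x, In x D1 -> ~ In x D2) -> inI a b t ->
  cont_in a b rho1 t \/ cont_in a b rho2 t.
Proof.
  intros [_ [C1 _]] [_ [C2 _]] Hdisj Ht.
  destruct (classic (In t D1)) as [HD | HD].
  - right; exact (C2 t Ht (Hdisj t HD)).
  - left; exact (C1 t Ht HD).
Qed.

Lemma uniform_small_osc (a b : R) (rho1 rho2 : R -> R) (D1 D2 : list R) (eta : R) :
  0 < eta ->
  first_kind_except a b rho1 D1 -> first_kind_except a b rho2 D2 ->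
  (forall x, In x D1 -> ~ In x D2) ->
  exists d, 0 < d /\ forall x, inI a b x ->
    small_osc a b rho1 x d eta \/ small_osc a b rho2 x d eta.
Proof.
  intros Heta F1 F2 Hdisj; apply lebesgue_number.
  - intros t Ht.
    destruct (one_continuous a b rho1 rho2 D1 D2 t F1 F2 Hdisj Ht) as [Hc | Hc];
      destruct (cont_small_osc a b _ t eta Heta Hc) as [r [Hr Hosc]];
      exists r; tauto.
  - intros t r x d [Hosc | Hosc] Hball; [left | right];
      exact (small_osc_sub a b _ t r x d eta Hosc Hball).
Qed.

Definition lower_wit (a b : R) (rhohat : R -> R) (Delta x v : R) : Prop :=
  exists y, inI a b y /\ Rabs (y - x) <= Delta /\ rhohat y - Delta < v.

Definition upper_wit (a b : R) (rhohat : R -> R) (Delta x v : R) : Prop :=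
  exists y, inI a b y /\ Rabs (y - x) <= Delta /\ v < rhohat y + Delta.

(* Lower bounds add up when one of the two limits oscillates little near x:
   the witness of the other summand serves for the sum. *)
Lemma lower_wit_sum (a b : R) (rho1 rho2 : R -> R) (x v1 v2 dl eta Delta : R) :
  2 * dl + eta <= Delta ->
  small_osc a b rho1 x dl eta \/ small_osc a b rho2 x dl eta ->
  lower_wit a b rho1 dl x v1 -> lower_wit a b rho2 dl x v2 ->
  lower_wit a b (fun y => rho1 y + rho2 y) Delta x (v1 + v2).
Proof.
  intros HDelta Hosc [y1 [Hy1 [Hy1x Hv1]]] [y2 [Hy2 [Hy2x Hv2]]].
  destruct Hosc as [Hosc | Hosc].
  - pose proof (Rabs_def2 _ _ (Hosc y2 y1 Hy2 Hy1 Hy2x Hy1x)).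
    pose proof (Rabs_pos (y2 - x)).
    exists y2; split; [exact Hy2 | split; lra].
  - pose proof (Rabs_def2 _ _ (Hosc y1 y2 Hy1 Hy2 Hy1x Hy2x)).
    pose proof (Rabs_pos (y1 - x)).
    exists y1; split; [exact Hy1 | split; lra].
Qed.

Lemma upper_wit_sum (a b : R) (rho1 rho2 : R -> R) (x v1 v2 dl eta Delta : R) :
  2 * dl + eta <= Delta ->
  small_osc a b rho1 x dl eta \/ small_osc a b rho2 x dl eta ->
  upper_wit a b rho1 dl x v1 -> upper_wit a b rho2 dl x v2 ->
  upper_wit a b (fun y => rho1 y + rho2 y) Delta x (v1 + v2).
Proof.
  intros HDelta Hosc [y1 [Hy1 [Hy1x Hv1]]] [y2 [Hy2 [Hy2x Hv2]]].
  destruct Hosc as [Hosc | Hosc].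
  - pose proof (Rabs_def2 _ _ (Hosc y2 y1 Hy2 Hy1 Hy2x Hy1x)).
    pose proof (Rabs_pos (y2 - x)).
    exists y2; split; [exact Hy2 | split; lra].
  - pose proof (Rabs_def2 _ _ (Hosc y1 y2 Hy1 Hy2 Hy1x Hy2x)).
    pose proof (Rabs_pos (y1 - x)).
    exists y1; split; [exact Hy1 | split; lra].
Qed.

Theorem mainTheorem14 (a b : R) (rho1 rho2 : R -> R) (D1 D2 : list R)
  (rho1e rho2e : R -> R -> R) :
  first_kind_except a b rho1 D1 ->
  first_kind_except a b rho2 D2 ->
  (forall x, In x D1 -> ~ In x D2) ->
  lim_fam a b rho1e rho1 ->
  lim_fam a b rho2e rho2 ->
  lim_fam a b (fun eps x => rho1e eps x + rho2e eps x) (fun x => rho1 x + rho2 x).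
Proof.
  intros F1 F2 Hdisj L1 L2 Delta HDelta.
  destruct (uniform_small_osc a b rho1 rho2 D1 D2 (Delta / 4) ltac:(lra) F1 F2 Hdisj)
    as [d [Hd Hunif]].
  set (dl := Rmin d (Delta / 4)).
  assert (Hdl : 0 < dl /\ dl <= d /\ dl <= Delta / 4)
    by (split; [apply Rmin_pos | split; [apply Rmin_l | apply Rmin_r]]; lra).
  destruct (L1 dl (proj1 Hdl)) as [e1 [He1 H1]].
  destruct (L2 dl (proj1 Hdl)) as [e2 [He2 H2]].
  exists (Rmin e1 e2); split; [apply Rmin_pos; lra |].
  intros eps Heps x Hx.
  pose proof (Rmin_l e1 e2); pose proof (Rmin_r e1 e2).
  destruct (H1 eps ltac:(lra) x Hx) as [Low1 Up1].
  destruct (H2 eps ltac:(lra) x Hx) as [Low2 Up2].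
  assert (Hosc : small_osc a b rho1 x dl (Delta / 4) \/ small_osc a b rho2 x dl (Delta / 4)).
  { destruct (Hunif x Hx); [left | right];
      (eapply small_osc_sub; [eassumption | rewrite Rminus_diag, Rabs_R0; lra]). }
  split.
  - exact (lower_wit_sum a b rho1 rho2 x _ _ dl (Delta / 4) Delta
             ltac:(lra) Hosc Low1 Low2).
  - exact (upper_wit_sum a b rho1 rho2 x _ _ dl (Delta / 4) Delta
             ltac:(lra) Hosc Up1 Up2).
Qed.
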